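(* For all $0<b<B\le1$ and every integer $n\ge2$, letting $k=\min\big(\lfloor 1/b+1/2\rfloor,\ \lceil 2B/b\rceil-1,\ n\big)$, $$\max\Big(2-b,\ \frac{k\,(2-k b)}{2-b}\Big)\le\textsc{PoF-Profit-Submodular}(b,B)\le\min\big(\lceil 2B/b\rceil-1,\,n\big).$$
   Context: An instance $\langle A,f,c\rangle$ consists of a finite set $A$ of agents, a monotone nondecreasing $f:2^A\to[0,1]$, and costs $c_i\ge0$. For $S\subseteq A$, $i\in S$: $f_S(i)=f(S)-f(S\setminus\{i\})$; $p(S)=\sum_{i\in S}c_i/f_S(i)$ (conventions: $0$ if $c_i=0=f_S(i)$, $\infty$ if $c_i>0=f_S(i)$); the profit is $g(S)=(1-p(S))f(S)$. $f$ is submodular if $f_S(i)\ge f_{S'}(i)$ whenever $S\subseteq S'$, $i\in S$. $\textsc{Max-Profit}(B)=\max\{g(S):p(S)\le B\}$. $\textsc{PoF-Profit-Submodular}(b,B)$ is the supremum of $\textsc{Max-Profit}(B)/\textsc{Max-Profit}(b)$ over all instances with submodular $f$, at most $n$ agents, and $\max_{i\in A}p(\{i\})\le b$. *)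

From HB Require Import structures.
From mathcomp Require Import all_boot all_order all_algebra.
From mathcomp Require Import all_classical all_reals.
From mathcomp Require Import ereal.
Set Implicit Arguments. Unset Strict Implicit. Unset Printing Implicit Defensive.
Import Order.TTheory GRing.Theory Num.Theory.
Local Open Scope ring_scope.

Section Defs.
Variable R : realType.
Variable A : finType.

Definition marg (f : {set A} -> R) (S : {set A}) (i : A) : R :=
  f S - f (S :\ i).

Definition pterm (f : {set A} -> R) (c : A -> R) (S : {set A}) (i : A) : \bar R :=
  if marg f S i == 0 then (if c i == 0 then 0%E else +oo%E)
  else (c i / marg f S i)%:E.

Definition pay (f : {set A} -> R) (c : A -> R) (S : {set A}) : \bar R :=
  (\sum_(i in S) pterm f c S i)%E.

(* profit g(S) = (1 - p(S)) f(S); only used for S with finite p(S) *)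
Definition profit (f : {set A} -> R) (c : A -> R) (S : {set A}) : R :=
  (1 - fine (pay f c S)) * f S.

(* Max-Profit(B) = max { g(S) : p(S) <= B }.  The empty set is always
   feasible with g(emptyset) = f(emptyset) >= 0, so using 0 as the neutral
   element of the max does not change the value. *)
Definition max_profit (f : {set A} -> R) (c : A -> R) (B : R) : R :=
  \big[Num.max/0]_(S : {set A} | (pay f c S <= B%:E)%E) profit f c S.

Definition monotone_set_fun (f : {set A} -> R) : Prop :=
  forall S T : {set A}, S \subset T -> f S <= f T.

Definition submodular (f : {set A} -> R) : Prop :=
  forall (S S' : {set A}) (i : A), S \subset S' -> i \in S ->
    marg f S' i <= marg f S i.

Definition valid_instance (n : nat) (b : R) (f : {set A} -> R) (c : A -> R) : Prop :=
  (#|A| <= n)%N /\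
  [/\ (forall S, 0 <= f S <= 1),
      monotone_set_fun f,
      submodular f,
      (forall i, 0 <= c i) &
      (forall i, (pay f c [set i] <= b%:E)%E)].
End Defs.

Definition pof_profit_submodular (R : realType) (n : nat) (b B : R) : \bar R :=
  ereal_sup [set r : \bar R | exists (A : finType) (f : {set A} -> R) (c : A -> R),
     valid_instance n b f c /\ r = (max_profit f c B / max_profit f c b)%:E].

(** Let S be optimal for budget B and give each agent i of S
    the weight t_i = c_i / f_S(i), so that t(S) = p(S) <= B.  By submodularity
    p(G) <= t(G) and (1 - p(S)) f(G) <= g(G) for every G included in S.  Split S
    into the fewest blocks that are feasible for budget b (singletons are):
    two blocks of total weight at most b could be merged, so m blocks satisfy
    m b < 2 t(S) <= 2 B, and of course m <= |S| <= n.  By subadditivity,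
    g(S) = (1 - p(S)) f(S) <= sum_G (1 - p(S)) f(G) <= m Max-Profit(b).

    The lower bounds come from additive instances.  Two agents of values
    (1-b)/(2-b) and 1/(2-b) whose payments are d and b: budget b affords only
    one, budget B both, and the ratio tends to 2 - b as d goes to 0.  Then k
    identical agents of value 1/k and payment slightly above b/2: budget b
    affords one, budget B all of them, and the ratio tends to k(2-kb)/(2-b). *)

From HB Require Import structures.
From mathcomp Require Import all_boot all_order all_algebra.
From mathcomp Require Import all_classical all_reals.
From mathcomp Require Import ereal.
From mathcomp Require Import ring lra.
(* Re-imported so that the finset lemma names shadow those of classical_sets. *)
From mathcomp Require Import fintype finset.
Import Order.TTheory GRing.Theory Num.Theory.
Local Open Scope ring_scope.
Set Implicit Arguments. Unset Strict Implicit. Unset Printing Implicit Defensive.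

Section SubmodularInstance.
Variables (R : realType) (A : finType) (f : {set A} -> R) (c : A -> R).
Hypothesis f_ge0 : forall S, 0 <= f S.
Hypothesis f_mono : monotone_set_fun f.
Hypothesis f_sub : submodular f.
Hypothesis c_ge0 : forall i, 0 <= c i.

Lemma marg_ge0 (S : {set A}) i : 0 <= marg f S i.
Proof. by rewrite subr_ge0; apply: f_mono; exact: subD1set. Qed.

Lemma pterm_ge0 (S : {set A}) i : (0 <= pterm f c S i)%E.
Proof.
rewrite /pterm; case: eqP => _; first by case: eqP.
by rewrite lee_fin divr_ge0 // marg_ge0.
Qed.

Lemma pay_ge0 (S : {set A}) : (0 <= pay f c S)%E.
Proof. by apply: sume_ge0 => i _; exact: pterm_ge0. Qed.

Lemma pterm_subset (G S : {set A}) i : G \subset S -> i \in G ->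
  (pterm f c G i <= pterm f c S i)%E.
Proof.
move=> GS iG; have margGS := f_sub GS iG.
rewrite /pterm; have [_|margS_neq0] := eqVneq (marg f S i) 0.
  have [ci0|_] := eqVneq (c i) 0; last exact: leey.
  by rewrite ci0 mul0r; case: ifP.
have margS_gt0 : 0 < marg f S i by rewrite lt_def margS_neq0 marg_ge0.
have margG_gt0 := lt_le_trans margS_gt0 margGS.
rewrite (gt_eqF margG_gt0) lee_fin ler_wpM2l // lef_pV2 //.
Qed.

Lemma pay_subset (G S : {set A}) : G \subset S -> (pay f c G <= pay f c S)%E.
Proof.
move=> GS; apply: le_trans (_ : (\sum_(i in G) pterm f c S i <= _)%E).
  by apply: lee_sum => i iG; exact: pterm_subset.
rewrite [X in (_ <= X)%E](big_setID G) /= (setIidPr GS) -[X in (X <= _)%E]adde0.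
by apply: leeD2l; apply: sume_ge0 => i _; exact: pterm_ge0.
Qed.

Lemma gain_antitone (G S : {set A}) i : G \subset S -> f (i |: S) - f S <= f (i |: G) - f G.
Proof.
move=> GS; have [iS|iNS] := boolP (i \in S).
  have -> : i |: S = S by apply/setUidPr; rewrite sub1set.
  by rewrite subrr subr_ge0; apply: f_mono; exact: subsetUr.
have iNG : i \notin G by apply: contra iNS; exact: (subsetP GS).
by have := f_sub (setUS [set i] GS) (setU11 i G); rewrite /marg !setU1K.
Qed.

Lemma subadditiveU (G H : {set A}) : f (G :|: H) <= f G + f H.
Proof.
suff: forall s : seq A, f ([set x in s] :|: H) - f H <= f [set x in s] - f set0.
  by move/(_ (enum G)); rewrite set_enum; have := f_ge0 set0; lra.
elim=> [|i s IH].
  by rewrite (_ : [set x in [::]] = set0) ?set0U ?subrr //; apply/setP => x; rewrite !inE.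
have -> : [set x in i :: s] = i |: [set x in s] by apply/setP => x; rewrite !inE.
have := gain_antitone i (subsetUl [set x in s] H); rewrite -setUA; lra.
Qed.

Lemma subadditive_bigcup (I : Type) (s : seq I) (P : pred I) (F : I -> {set A}) (G : {set A}) :
  f (G :|: \bigcup_(j <- s | P j) F j) <= f G + \sum_(j <- s | P j) f (F j).
Proof.
elim: s G => [|j s IH] G; first by rewrite !big_nil setU0 addr0.
rewrite !big_cons; case: (P j); last exact: IH.
rewrite setUA addrA; apply: le_trans (IH _) _.
by rewrite lerD2r subadditiveU.
Qed.

Lemma max_profit_ge0 B : 0 <= max_profit f c B.
Proof. exact: bigmax_ge_id. Qed.

End SubmodularInstance.

Lemma profit_le_max_profit (R : realType) (A : finType) (f : {set A} -> R) c G B :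
  (pay f c G <= B%:E)%E -> profit f c G <= max_profit f c B.
Proof. exact: le_bigmax_cond. Qed.

Lemma card_mul_lt_double_sum (R : realFieldType) (T : finType) (L : {set T}) (s : T -> R) b :
  (1 < #|L|)%N -> {in L &, forall x y, x != y -> b < s x + s y} ->
  #|L|%:R * b < 2 * \sum_(x in L) s x.
Proof.
(* Summing over ordered pairs of distinct elements counts each s x 2(m-1) times. *)
move=> L_gt1 sL; set m := #|L|; set Sigma := \sum_(x in L) s x.
have m_pred : m%:R = m.-1%:R + 1 :> R by rewrite natr1 prednK // ltnW.
have cardD1 x : x \in L -> #|L :\ x| = m.-1 by move=> xL; rewrite [m](cardsD1 x) xL.
have pairs_lt : \sum_(x in L) \sum_(y in L :\ x) b < \sum_(x in L) \sum_(y in L :\ x) (s x + s y).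
  have [x0 x0L] : exists x0, x0 \in L by apply/set0Pn; rewrite -card_gt0 ltnW.
  apply: ltr_sum; first by apply/hasP; exists x0; rewrite ?mem_index_enum.
  move=> x xL; have [y yLx] : exists y, y \in L :\ x.
    by apply/set0Pn; rewrite -card_gt0 cardD1 // -ltnS prednK // ltnW.
  apply: ltr_sum; first by apply/hasP; exists y; rewrite ?mem_index_enum.
  by move=> z; rewrite !inE => /andP[zx zL]; rewrite sL // eq_sym.
have pairs_b : \sum_(x in L) \sum_(y in L :\ x) b = m%:R * (m.-1%:R * b).
  under eq_bigr => x xL do rewrite sumr_const cardD1 // -[b *+ _]mulr_natl.
  by rewrite sumr_const -[(_ * _) *+ _]mulr_natl.
have pairs_s : \sum_(x in L) \sum_(y in L :\ x) (s x + s y) = 2 * m.-1%:R * Sigma.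
  under eq_bigr => x xL.
    rewrite big_split /= sumr_const cardD1 // -[s x *+ _]mulr_natl.
    rewrite (_ : \sum_(y in L :\ x) s y = Sigma - s x); last first.
      by rewrite [Sigma](big_setD1 x xL) /= addrC addrK.
    over.
  rewrite big_split /= -mulr_sumr sumrB sumr_const -/Sigma -[Sigma *+ _]mulr_natl -/m m_pred.
  ring.
rewrite pairs_b pairs_s in pairs_lt.
have m1_gt0 : 0 < m.-1%:R :> R by rewrite ltr0n -ltnS prednK // ltnW.
rewrite -(ltr_pM2l m1_gt0); lra.
Qed.

Definition block_bound (R : realType) (n : nat) (b B : R) : int :=
  Order.min (Num.ceil (2 * B / b) - 1) n%:Z.

Lemma le_block_bound (R : realType) n (b B : R) (m : nat) : 0 < b ->
  (m%:Z <= block_bound n b B) = (m <= n)%N && (m%:R * b < 2 * B).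
Proof.
by move=> b_gt0; rewrite le_min lez_nat andbC -ltzD1 subrK ceil_gt_int ltr_pdivlMr.
Qed.

Section Blocks.
Variables (R : realType) (A : finType) (f : {set A} -> R) (c : A -> R).
Hypothesis f_ge0 : forall S, 0 <= f S.
Hypothesis f_mono : monotone_set_fun f.
Hypothesis f_sub : submodular f.
Hypothesis c_ge0 : forall i, 0 <= c i.
Variables (S0 : {set A}) (B0 b : R).
Hypothesis S0_feasible : (pay f c S0 <= B0%:E)%E.
Hypothesis pay_singleton : forall i, (pay f c [set i] <= b%:E)%E.

(* Finite since S0 is feasible; by submodularity the weight of an agent dominates
   its payment in any subset of S0 (pay_le_weight). *)
Definition weight (G : {set A}) := \sum_(i in G) fine (pterm f c S0 i).

Lemma pterm_S0_EFin i : i \in S0 -> pterm f c S0 i = (fine (pterm f c S0 i))%:E.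
Proof.
move=> iS0; have := pterm_ge0 f_mono c_ge0 S0 i.
have : (pterm f c S0 i <= B0%:E)%E.
  apply: le_trans S0_feasible; rewrite /pay (bigD1 i) //= leeDl //.
  by apply: sume_ge0 => j _; exact: pterm_ge0.
by case: (pterm f c S0 i).
Qed.

Lemma pay_S0 : pay f c S0 = (weight S0)%:E.
Proof. by rewrite -sumEFin; apply: eq_bigr => i; exact: pterm_S0_EFin. Qed.

Lemma pay_le_weight (G : {set A}) : G \subset S0 -> (pay f c G <= (weight G)%:E)%E.
Proof.
move=> GS0; rewrite -sumEFin; apply: lee_sum => i iG.
rewrite -pterm_S0_EFin ?(subsetP GS0) //; exact: pterm_subset.
Qed.

Lemma weight_subset (G : {set A}) : G \subset S0 -> weight G <= weight S0.
Proof.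
move=> GS0; rewrite [weight S0](big_setID G) /= (setIidPr GS0) lerDl.
by apply: sumr_ge0 => i _; apply: fine_ge0; exact: pterm_ge0.
Qed.

Lemma profit_ge_weight (G : {set A}) : G \subset S0 -> (1 - weight S0) * f G <= profit f c G.
Proof.
move=> GS0; apply: ler_wpM2r => //; rewrite lerD2l lerN2.
have := pay_le_weight GS0; have := pay_ge0 f_mono c_ge0 G.
case: (pay f c G) => //= p _; rewrite lee_fin => /le_trans; apply.
exact: weight_subset.
Qed.

(* A labelling g encodes the partition of S0 into the nonempty fibers of g. *)
Definition fiber (g : {ffun A -> A}) a := [set x in S0 | g x == a].

Definition admissible (g : {ffun A -> A}) := [forall a, (pay f c (fiber g a) <= b%:E)%E].

Definition relabel (g : {ffun A -> A}) a' a := [ffun x => if g x == a' then a else g x].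

Lemma fiber_sub g a : fiber g a \subset S0.
Proof. by apply/subsetP => x; rewrite inE => /andP[]. Qed.

Lemma admissible_id : admissible [ffun x => x].
Proof.
apply/forallP => a; apply: le_trans (pay_singleton a); apply: pay_subset => //.
by apply/subsetP => x; rewrite !inE ffunE => /andP[_].
Qed.

Lemma weight_fiber_relabel g a a' : a != a' ->
  weight (fiber (relabel g a' a) a) = weight (fiber g a) + weight (fiber g a').
Proof.
move=> aa'; rewrite /weight [LHS]big_mkcond [X in X + _]big_mkcond [X in _ + X]big_mkcond.
rewrite -big_split; apply: eq_bigr => x _.
rewrite !inE ffunE; case: (x \in S0) => /=; last by rewrite addr0.
have [->|_] := eqVneq (g x) a'; last by rewrite addr0.
by rewrite !eqxx eq_sym (negbTE aa') add0r.
Qed.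

Lemma admissible_relabel g a a' : admissible g -> a != a' ->
  weight (fiber g a) + weight (fiber g a') <= b -> admissible (relabel g a' a).
Proof.
move=> /forallP adm_g aa' light; apply/forallP => y.
have [->|ya] := eqVneq y a.
  by apply: le_trans (pay_le_weight (fiber_sub _ _)) _; rewrite weight_fiber_relabel.
apply: le_trans (adm_g y); apply: pay_subset => //.
apply/subsetP => x; rewrite !inE ffunE.
by case: (eqVneq (g x) a') => // _; rewrite eq_sym (negbTE ya) andbF.
Qed.

Lemma card_relabel (g : {ffun A -> A}) a a' : a \in g @: S0 -> a' \in g @: S0 -> a != a' ->
  (#|relabel g a' a @: S0| < #|g @: S0|)%N.
Proof.
move=> aL a'L aa'; apply/proper_card/(sub_proper_trans _ (properD1 a'L)).
apply/subsetP => _ /imsetP[x xS0 ->]; rewrite in_setD1 ffunE.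
case: (eqVneq (g x) a') => [_|gxa']; first by rewrite aa'.
by rewrite gxa' imset_f.
Qed.

(* Take an admissible labelling with the fewest blocks. *)
Lemma exists_heavy_pairs_labelling : exists g : {ffun A -> A}, admissible g /\
  {in g @: S0 &, forall a a', a != a' -> b < weight (fiber g a) + weight (fiber g a')}.
Proof.
case: (arg_minnP (fun g : {ffun A -> A} => #|g @: S0|) admissible_id) => g adm_g g_min.
exists g; split => // a a' aL a'L aa'; rewrite ltNge; apply/negP => light.
have := g_min _ (admissible_relabel adm_g aa' light).
by rewrite leqNgt card_relabel.
Qed.

Lemma weight_fibers (g : {ffun A -> A}) :
  weight S0 = \sum_(a in g @: S0) weight (fiber g a).
Proof.
rewrite /weight (partition_big_imset g); apply: eq_bigr => a _.
by apply: eq_bigl => x; rewrite inE.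
Qed.

Lemma f_le_sum_fibers (g : {ffun A -> A}) : S0 != set0 ->
  f S0 <= \sum_(a in g @: S0) f (fiber g a).
Proof.
case/set0Pn => x0 x0S0; have a0L : g x0 \in g @: S0 by exact: imset_f.
rewrite (bigD1 (g x0)) //=; apply: le_trans (subadditive_bigcup f_ge0 f_mono f_sub _ _ _ _).
apply: f_mono; apply/subsetP => x xS0; rewrite inE.
have [gx0|gxn] := eqVneq (g x) (g x0); first by rewrite inE xS0 gx0 eqxx.
apply/orP; right; apply/bigcupP; exists (g x); first by rewrite imset_f.
by rewrite inE xS0 eqxx.
Qed.

Lemma profit_S0_le_blocks (g : {ffun A -> A}) : admissible g -> S0 != set0 ->
  profit f c S0 <= #|g @: S0|%:R * max_profit f c b.
Proof.
move=> /forallP adm_g S0_neq0; rewrite /profit pay_S0 /=.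
have [T_ge1|T_lt1] := lerP 1 (weight S0).
  apply: le_trans (_ : 0 <= _); first by rewrite mulr_le0_ge0 ?subr_le0.
  by rewrite mulr_ge0 ?max_profit_ge0.
apply: le_trans (ler_wpM2l _ (f_le_sum_fibers g S0_neq0)) _; first by lra.
rewrite mulr_sumr [X in _ <= X]mulr_natl -sumr_const; apply: ler_sum => a _.
apply: le_trans (profit_ge_weight (fiber_sub g a)) _.
exact: profit_le_max_profit (adm_g a).
Qed.

Lemma profit_S0_le_block_bound n : (#|A| <= n)%N -> (1 <= n)%N -> 0 < b -> b < B0 ->
  profit f c S0 <= (block_bound n b B0)%:~R * max_profit f c b.
Proof.
move=> An n_ge1 b_gt0 bB0.
suff [m m_le profit_le] : exists2 m : nat, m%:Z <= block_bound n b B0 &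
    profit f c S0 <= m%:R * max_profit f c b.
  by apply: le_trans profit_le _; rewrite ler_wpM2r ?max_profit_ge0 // -[m%:R]/(m%:Z%:~R) ler_int.
have [->|S0_neq0] := eqVneq S0 set0.
  exists 1%N; first by rewrite le_block_bound // n_ge1 mul1r; lra.
  rewrite mul1r; apply: profit_le_max_profit.
  by rewrite /pay big_set0 lee_fin ltW.
have [g [adm_g heavy]] := exists_heavy_pairs_labelling.
exists #|g @: S0|; last exact: profit_S0_le_blocks.
rewrite le_block_bound //; apply/andP; split.
  exact: leq_trans (leq_imset_card _ _) (leq_trans (max_card _) An).
have [L_le1|L_gt1] := leqP #|g @: S0| 1.
  apply: le_lt_trans (_ : 1 * b < _); last by lra.
  by rewrite ler_wpM2r ?lern1 // ltW.
have T_le : weight S0 <= B0 by rewrite -lee_fin -pay_S0.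
have := card_mul_lt_double_sum L_gt1 heavy; rewrite -weight_fibers; lra.
Qed.

End Blocks.

Lemma block_bound_ge1 (R : realType) n (b B : R) : (1 <= n)%N -> 0 < b -> b < B ->
  1 <= block_bound n b B.
Proof. by move=> n_ge1 b_gt0 bB; rewrite (@le_block_bound _ n b B 1) // n_ge1 mul1r; lra. Qed.

Lemma max_profit_le_block_bound (R : realType) (A : finType) (f : {set A} -> R) c n (b B : R) :
  valid_instance n b f c -> (1 <= n)%N -> 0 < b -> b < B ->
  max_profit f c B <= (block_bound n b B)%:~R * max_profit f c b.
Proof.
move=> [An [f01 f_mono f_sub c_ge0 pay1]] n_ge1 b_gt0 bB.
have f_ge0 S : 0 <= f S by case/andP: (f01 S).
apply: bigmax_le => [|S payS]; last exact: profit_S0_le_block_bound.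
by rewrite mulr_ge0 ?max_profit_ge0 // ler0z (le_trans _ (block_bound_ge1 n_ge1 b_gt0 bB)).
Qed.

Lemma pof_le_block_bound (R : realType) n (b B : R) : (1 <= n)%N -> 0 < b -> b < B ->
  (pof_profit_submodular n b B <= (block_bound n b B)%:~R%:E)%E.
Proof.
move=> n_ge1 b_gt0 bB; apply: ge_ereal_sup => _ [A [f [c [valid ->]]]].
have bound_ge0 : 0 <= (block_bound n b B)%:~R :> R.
  by rewrite ler0z (le_trans _ (block_bound_ge1 n_ge1 b_gt0 bB)).
(* If Max-Profit(b) = 0 the ratio is 0, as x / 0 = 0. *)
have [->|Mb_neq0] := eqVneq (max_profit f c b) 0; first by rewrite invr0 mulr0 lee_fin.
have Mb_gt0 : 0 < max_profit f c b.
  by rewrite lt_def Mb_neq0; case: valid => _ [_ f_mono _ c_ge0 _]; exact: max_profit_ge0.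
by rewrite lee_fin ler_pdivrMr //; exact: max_profit_le_block_bound.
Qed.

Section AdditiveInstance.
Variables (R : realType) (A : finType) (w r : A -> R).
Hypothesis w_gt0 : forall i, 0 < w i.
Hypothesis r_ge0 : forall i, 0 <= r i.

Definition additive_fun (S : {set A}) := \sum_(i in S) w i.
Definition additive_cost i := r i * w i.

Lemma pterm_additive (S : {set A}) i : i \in S -> pterm additive_fun additive_cost S i = (r i)%:E.
Proof.
move=> iS; have margE : marg additive_fun S i = w i.
  by rewrite /marg /additive_fun (big_setD1 i iS) /= addrK.
by rewrite /pterm margE (gt_eqF (w_gt0 i)) /additive_cost mulfK // gt_eqF.
Qed.

Lemma pay_additive (S : {set A}) : pay additive_fun additive_cost S = (\sum_(i in S) r i)%:E.
Proof. by rewrite -sumEFin; apply: eq_bigr => i; exact: pterm_additive. Qed.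

Lemma profit_additive (S : {set A}) :
  profit additive_fun additive_cost S = (1 - \sum_(i in S) r i) * \sum_(i in S) w i.
Proof. by rewrite /profit pay_additive. Qed.

Lemma additive_fun_subset (S T : {set A}) : S \subset T -> additive_fun S <= additive_fun T.
Proof.
move=> ST; rewrite /additive_fun [X in _ <= X](big_setID S) /= (setIidPr ST) lerDl.
by apply: sumr_ge0 => i _; exact: ltW.
Qed.

Lemma valid_additive n (b : R) : (#|A| <= n)%N -> \sum_i w i <= 1 -> (forall i, r i <= b) ->
  valid_instance n b additive_fun additive_cost.
Proof.
move=> An w_le1 r_le; split => //; split.
- move=> S; rewrite sumr_ge0 => [|i _]; last exact: ltW.
  apply: le_trans (additive_fun_subset (subsetT S)) _.
  by rewrite /additive_fun (eq_bigl predT) // => i; rewrite inE.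
- exact: additive_fun_subset.
- move=> S S' i SS' iS; rewrite /marg.
  by rewrite /additive_fun (big_setD1 i iS) (big_setD1 i (subsetP SS' i iS)) /= !addrK.
- by move=> i; rewrite mulr_ge0 // ltW.
- by move=> i; rewrite pay_additive big_set1 lee_fin.
Qed.

End AdditiveInstance.

Lemma ler_ratio (R : realFieldType) (x y u v : R) : 0 < y -> y <= u -> 0 <= v -> v <= x ->
  v / u <= x / y.
Proof.
move=> y_gt0 yu v_ge0 vx; have u_gt0 := lt_le_trans y_gt0 yu.
apply: le_trans (_ : v / y <= _); first by rewrite ler_wpM2l // lef_pV2.
by rewrite ler_wpM2r // invr_ge0 ltW.
Qed.

Lemma le_ereal_sup_approx (R : realType) (S : set \bar R) (x C e0 : R) : 0 <= C -> 0 < e0 ->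
  (forall e, 0 < e -> e <= e0 -> exists2 z, S z & ((x - C * e)%:E <= z)%E) ->
  (x%:E <= ereal_sup S)%E.
Proof.
move=> C_ge0 e0_gt0 approx; apply/lee_addgt0Pr => eps eps_gt0.
pose e := Num.min e0 (eps / (C + 1)).
have e_gt0 : 0 < e by rewrite lt_min e0_gt0 divr_gt0 //; lra.
have e_le : e <= e0 by rewrite ge_min lexx.
have [z Sz xz] := approx e e_gt0 e_le.
have Ce_le : C * e <= eps.
  have : e <= eps / (C + 1) by rewrite ge_min lexx orbT.
  rewrite ler_pdivlMr; last by lra.
  nra.
rewrite -leeBlDr // -EFinB; apply: le_trans (ereal_sup_ubound Sz).
by apply: le_trans xz; rewrite lee_fin; lra.
Qed.

Lemma pof_ge_approx (R : realType) n (b B x C e0 : R) : 0 <= C -> 0 < e0 ->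
  (forall e, 0 < e -> e <= e0 -> exists (A : finType) (f : {set A} -> R) (c : A -> R),
     valid_instance n b f c /\ x - C * e <= max_profit f c B / max_profit f c b) ->
  (x%:E <= pof_profit_submodular n b B)%E.
Proof.
move=> C_ge0 e0_gt0 inst; apply: le_ereal_sup_approx C_ge0 e0_gt0 _ => e e_gt0 e_le.
have [A [f [c [valid ratio_ge]]]] := inst e e_gt0 e_le.
by exists (max_profit f c B / max_profit f c b)%:E; [exists A, f, c | rewrite lee_fin].
Qed.

Lemma two_agents_instance (R : realType) n (b B d : R) : (2 <= n)%N -> 0 < b -> b < 1 ->
  B <= 1 -> 0 < d -> d <= b -> b + d <= B ->
  exists (A : finType) (f : {set A} -> R) (c : A -> R), valid_instance n b f c /\
    2 - b - (2 - b) / (1 - b) * d <= max_profit f c B / max_profit f c b.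
Proof.
move=> n_ge2 b_gt0 b_lt1 B_le1 d_gt0 db bdB.
pose u := (1 - b) / (2 - b); pose v := (2 - b)^-1.
have u_gt0 : 0 < u by rewrite divr_gt0 //; lra.
have v_gt0 : 0 < v by rewrite invr_gt0; lra.
have uv : u + v = 1 by rewrite /u /v; field; lra.
pose w (i : bool) := if i then u else v; pose r (i : bool) := if i then d else b.
have w_gt0 i : 0 < w i by case: i.
have r_ge0 i : 0 <= r i by case: i => /=; exact: ltW.
have sum_bool (F : bool -> R) (S : {set bool}) : \sum_(i in S) F i =
    (if true \in S then F true else 0) + (if false \in S then F false else 0).
  by rewrite big_mkcond big_bool.
exists (bool : finType), (additive_fun w), (additive_cost w r); split.
  apply: valid_additive => //; first by rewrite card_bool.
    by rewrite big_bool /= uv.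
  by case => //=; exact: db.
have Mb_le : max_profit (additive_fun w) (additive_cost w r) b <= u.
  apply: bigmax_le => [|S]; first exact: ltW.
  rewrite pay_additive // profit_additive // !sum_bool lee_fin /w /r.
  case: (true \in S); case: (false \in S) => /= payS.
  - lra.
  - by rewrite !addr0 ler_piMl //; lra.
  - by rewrite !add0r.
  - by rewrite !addr0 mulr0 ltW.
have Mb_gt0 : 0 < max_profit (additive_fun w) (additive_cost w r) b.
  apply: lt_le_trans (profit_le_max_profit (G := [set false]) _); last first.
    by rewrite pay_additive // big_set1 lee_fin.
  by rewrite profit_additive // /additive_fun !big_set1 /= mulr_gt0 //; lra.
have MB_ge : 1 - b - d <= max_profit (additive_fun w) (additive_cost w r) B.
  apply: le_trans (profit_le_max_profit (G := setT) _); last first.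
    by rewrite pay_additive // sum_bool !inE /= lee_fin; lra.
  by rewrite profit_additive // /additive_fun !sum_bool !inE /= uv; lra.
have -> : 2 - b - (2 - b) / (1 - b) * d = (1 - b - d) / u by rewrite /u; field; lra.
by apply: ler_ratio => //; lra.
Qed.

Lemma identical_agents_instance (R : realType) n k (b B e : R) : (0 < k)%N -> (k <= n)%N ->
  0 < b -> b < 1 -> B <= 1 -> 0 < e -> e <= b / 2 -> k%:R * (b / 2 + e) <= B ->
  exists (A : finType) (f : {set A} -> R) (c : A -> R), valid_instance n b f c /\
    k%:R * (2 - k%:R * b) / (2 - b) - k%:R * k%:R / (1 - b / 2) * e <=
      max_profit f c B / max_profit f c b.
Proof.
move=> k_gt0 kn b_gt0 b_lt1 B_le1 e_gt0 eb; set K := k%:R; set q := b / 2 + e => Kq_le_B.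
have K_gt0 : 0 < K by rewrite ltr0n.
have q_le_b : q <= b by rewrite /q; lra.
have b_lt_2q : b < 2 * q by rewrite /q; lra.
have half_b_le_q : b / 2 <= q by rewrite /q; lra.
pose w (i : 'I_k) := K^-1; pose r (i : 'I_k) := q.
have w_gt0 i : 0 < w i by rewrite invr_gt0.
have r_ge0 i : 0 <= r i by rewrite /r; lra.
have sum_r (S : {set 'I_k}) : \sum_(i in S) r i = #|S|%:R * q by rewrite sumr_const mulr_natl.
have sum_w (S : {set 'I_k}) : \sum_(i in S) w i = #|S|%:R / K by rewrite sumr_const mulr_natl.
exists ('I_k : finType), (additive_fun w), (additive_cost w r); split.
  apply: valid_additive => //; first by rewrite card_ord.
  by rewrite sumr_const card_ord -mulr_natl divff // gt_eqF.
have Mb_le : max_profit (additive_fun w) (additive_cost w r) b <= (1 - q) / K.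
  apply: bigmax_le => [|S]; first by rewrite divr_ge0 ?ltW //; lra.
  rewrite pay_additive // profit_additive // sum_r /additive_fun sum_w lee_fin => payS.
  have : (#|S| < 2)%N.
    rewrite ltnNge; apply/negP => S_ge2.
    have : 2 * q <= #|S|%:R * q by rewrite ler_wpM2r ?(ler_nat R 2) //; lra.
    lra.
  case: #|S| => [|[|//]] _; rewrite ?mulr1n ?mul1r //.
  by rewrite /= !mul0r subr0 mul1r divr_ge0 ?ltW //; lra.
have Mb_gt0 : 0 < max_profit (additive_fun w) (additive_cost w r) b.
  apply: lt_le_trans (profit_le_max_profit (G := [set Ordinal k_gt0]) _); last first.
    by rewrite pay_additive // big_set1 lee_fin /r; lra.
  by rewrite profit_additive // /additive_fun !big_set1 mulr_gt0 ?invr_gt0 // /r; lra.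
have MB_ge : 1 - K * q <= max_profit (additive_fun w) (additive_cost w r) B.
  apply: le_trans (profit_le_max_profit (G := setT) _); last first.
    by rewrite pay_additive // sum_r cardsT card_ord lee_fin.
  by rewrite profit_additive // /additive_fun sum_r sum_w cardsT card_ord divff ?gt_eqF // mulr1.
apply: le_trans (ler_ratio Mb_gt0 Mb_le _ MB_ge); last by lra.
have -> : (1 - K * q) / ((1 - q) / K) = K * (1 - K * q) / (1 - q) by field; lra.
have -> : K * (2 - K * b) / (2 - b) - K * K / (1 - b / 2) * e = K * (1 - K * q) / (1 - b / 2).
  by rewrite /q; field; lra.
by apply: ler_ratio => //; rewrite ?mulr_ge0; lra.
Qed.

Lemma pof_ge_two_agents (R : realType) n (b B : R) : (2 <= n)%N -> 0 < b -> b < B -> B <= 1 ->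
  ((2 - b)%:E <= pof_profit_submodular n b B)%E.
Proof.
move=> n_ge2 b_gt0 bB B_le1; have b_lt1 : b < 1 by lra.
apply: (@pof_ge_approx _ _ _ _ _ ((2 - b) / (1 - b)) (Num.min b (B - b))).
- by rewrite divr_ge0 //; lra.
- by rewrite lt_min b_gt0 subr_gt0.
move=> d d_gt0; rewrite le_min => /andP[db dB].
by apply: two_agents_instance => //; lra.
Qed.

Lemma pof_ge_identical_agents (R : realType) n k (b B : R) : (0 < k)%N -> (k <= n)%N ->
  0 < b -> b < 1 -> k%:R * b < 2 * B -> B <= 1 ->
  ((k%:R * (2 - k%:R * b) / (2 - b))%:E <= pof_profit_submodular n b B)%E.
Proof.
move=> k_gt0 kn b_gt0 b_lt1 kbB B_le1; have K_gt0 : 0 < k%:R :> R by rewrite ltr0n.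
apply: (@pof_ge_approx _ _ _ _ _ (k%:R * k%:R / (1 - b / 2))
                        (Num.min (b / 2) ((B - k%:R * b / 2) / k%:R))).
- by rewrite divr_ge0 ?mulr_ge0 ?ltW //; lra.
- by rewrite lt_min !divr_gt0 //; lra.
move=> e e_gt0; rewrite le_min => /andP[eb]; rewrite ler_pdivlMr // => eB.
by apply: identical_agents_instance => //; lra.
Qed.

Theorem mainTheorem16 (R : realType) (b B : R) (n : nat) :
  0 < b -> b < B -> B <= 1 -> (2 <= n)%N ->
  let k : int := Order.min (Num.floor (b^-1 + 2^-1))
                   (Order.min (Num.ceil (2 * B / b) - 1) (n%:Z)) in
  ((Num.max (2 - b) (k%:~R * (2 - k%:~R * b) / (2 - b)))%:E
     <= pof_profit_submodular n b B)%E /\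
  (pof_profit_submodular n b B
     <= (Order.min (Num.ceil (2 * B / b) - 1) (n%:Z))%:~R%:E)%E.
Proof.
move=> b_gt0 bB B_le1 n_ge2 k; have n_ge1 := ltnW n_ge2.
split; last exact: pof_le_block_bound.
have k_ge1 : 1 <= k.
  rewrite /k le_min (block_bound_ge1 n_ge1 b_gt0 bB) andbT floor_ge_int.
  have : 1 < b^-1 by rewrite invf_gt1 //; lra.
  have : 0 < 2^-1 :> R by rewrite invr_gt0.
  lra.
have k_le : k <= block_bound n b B by rewrite /k ge_min lexx orbT.
have [kn k_eq] : exists kn : nat, k = kn%:Z.
  by exists `|k|%N; rewrite gez0_abs // (le_trans _ k_ge1).
rewrite k_eq in k_ge1 k_le *; rewrite lez_nat in k_ge1.
move: k_le; rewrite le_block_bound // => /andP[kn_le kbB].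
rewrite EFin_max ge_max (pof_ge_two_agents n_ge2 b_gt0 bB B_le1) /=.
apply: pof_ge_identical_agents => //; lra.
Qed.
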